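(* Let $\mathcal{D}(\rho)=(1-p)\rho+pX\rho X$ be a bit-flip channel and $\mathcal{E}(\rho)=(1-q)\rho+qZ\rho Z$ a phase-flip channel, $p,q\in[0,1]$. The entanglement-assisted classical communication capacity over a quantum trajectory is $$C_{\text{E,Q}}=2+H(\alpha)+(1-p)(1-q)\log_2[(1-p)(1-q)]+p(1-q)\log_2[p(1-q)]+(1-p)q\log_2[(1-p)q]+pq\log_2(pq),$$ where $\alpha=1-pq$ and $H(\alpha)=-\alpha\log_2\alpha-(1-\alpha)\log_2(1-\alpha)$.
   Context: $X,Y,Z$ are Pauli matrices, $\sigma_0=I,\sigma_1=X,\sigma_2=Y,\sigma_3=Z$, $|\pm\rangle=(|0\rangle\pm|1\rangle)/\sqrt2$, $0\log_2 0=0$. For a Pauli channel $\mathcal{N}(\rho)=\sum_i r_i\sigma_i\rho\sigma_i$, the entanglement-assisted classical capacity (superdense coding, pre-shared EPR pair, equiprobable inputs) is $C_E(\mathcal{N})=2+\sum_i r_i\log_2 r_i$. Quantum trajectory: given Kraus operators $\{D_i\}$ of $\mathcal{D}$ and $\{E_j\}$ of $\mathcal{E}$ (here multiples of Pauli matrices), the switched channel on data $\rho$ and control $\omega=|+\rangle\langle+|$ is $\sum_{i,j}W_{i,j}(\rho\otimes\omega)W_{i,j}^\dagger$ with $W_{i,j}=E_jD_i\otimes|0\rangle\langle0|+D_iE_j\otimes|1\rangle\langle1|$. Its output has the form $p_+\mathcal{S}_+(\rho)\otimes|+\rangle\langle+|+p_-\mathcal{S}_-(\rho)\otimes|-\rangle\langle-|$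 (commuting Kraus pairs go to the $|+\rangle$ branch, anticommuting pairs to the $|-\rangle$ branch), with $\mathcal{S}_\pm$ normalized Pauli channels; the capacity is defined as $C_{\text{E,Q}}=p_+C_E(\mathcal{S}_+)+p_-C_E(\mathcal{S}_-)$. *)

From HB Require Import structures.
From mathcomp Require Import all_boot all_order all_algebra.
From mathcomp Require Import complex.
From mathcomp Require Import reals exp.
Set Implicit Arguments. Unset Strict Implicit. Unset Printing Implicit Defensive.
Import Order.TTheory GRing.Theory Num.Theory.
Local Open Scope ring_scope.
Local Open Scope complex_scope.

Section Defs.
Variable R : realType.

Definition xlog2x (x : R) : R := if x == 0 then 0 else x * (ln x / ln 2).

Definition Hbin (a : R) : R := - xlog2x a - xlog2x (1 - a).

(* Pauli matrices sigma_0 = I, sigma_1 = X, sigma_2 = Y, sigma_3 = Z over R[i] *)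
Definition pauli (k : 'I_4) : 'M[R[i]]_2 :=
  \matrix_(a < 2, b < 2)
    match val k with
    | 0%N => if a == b then 1 else 0
    | 1%N => if a == b then 0 else 1
    | 2%N => if a == b then 0 else (if val a == 0%N then - 'i else 'i)
    | _ => if a == b then (if val a == 0%N then 1 else -1) else 0
    end.

Definition phase (c : 'I_4) : R[i] := 'i ^+ val c.

(* a Pauli channel N(rho) = sum_k r_k sigma_k rho sigma_k is given by r : 'I_4 -> R *)
Definition CE (r : 'I_4 -> R) : R := 2 + \sum_(k < 4) xlog2x (r k).

(* the Kraus pair (D_i = sqrt(d_i) sigma_i, E_j = sqrt(e_j) sigma_j) commutes *)
Definition kcomm (i j : 'I_4) : bool := pauli i *m pauli j == pauli j *m pauli i.

Definition kprod (k i j : 'I_4) : bool :=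
  [exists c : 'I_4, pauli j *m pauli i == phase c *: pauli k].

(* weight of branch b (true = |+>, commuting pairs; false = |->, anticommuting) *)
Definition branch_p (d e : 'I_4 -> R) (b : bool) : R :=
  \sum_(i < 4) \sum_(j < 4 | kcomm i j == b) d i * e j.

Definition branch_S (d e : 'I_4 -> R) (b : bool) (k : 'I_4) : R :=
  (\sum_(i < 4) \sum_(j < 4 | (kcomm i j == b) && kprod k i j) d i * e j)
  / branch_p d e b.

Definition CEQ (d e : 'I_4 -> R) : R :=
  branch_p d e true * CE (branch_S d e true)
  + branch_p d e false * CE (branch_S d e false).

Definition bitflip (p : R) (k : 'I_4) : R :=
  if val k == 0%N then 1 - p else if val k == 1%N then p else 0.
Definition phaseflip (q : R) (k : 'I_4) : R :=
  if val k == 0%N then 1 - q else if val k == 3%N then q else 0.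

End Defs.

(* Commuting Kraus pairs (I,I), (I,Z), (X,I) land in the |+> branch, of weight 1 - pq, and the
   anticommuting pair (X,Z), with ZX = iY, in the |-> branch, of weight pq.  By the grouping
   rule of entropy, w C_E(r/w) = 2w + sum_k r_k log2 r_k - w log2 w whenever sum_k r_k = w, so
   the weighted capacities add up to 2 + H(1 - pq) plus the x log2 x terms of all four
   unnormalized Kraus weights. *)
From HB Require Import structures.
From mathcomp Require Import all_boot all_order all_algebra.
From mathcomp Require Import complex.
From mathcomp Require Import reals exp.
From mathcomp Require Import ring lra.
Set Implicit Arguments. Unset Strict Implicit. Unset Printing Implicit Defensive.
Import Order.TTheory GRing.Theory Num.Theory.
Local Open Scope ring_scope.

Local Notation i0 := (@Ordinal 4 0 isT).
Local Notation i1 := (@Ordinal 4 1 isT).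
Local Notation i2 := (@Ordinal 4 2 isT).
Local Notation i3 := (@Ordinal 4 3 isT).

Section PauliAlgebra.
Local Open Scope complex_scope.
Variable R : realType.
Notation C := (R[i]).
Notation o0 := (@Ordinal 2 0 isT).
Notation o1 := (@Ordinal 2 1 isT).

Lemma mx2P (A B : 'M[C]_2) :
  A o0 o0 = B o0 o0 -> A o0 o1 = B o0 o1 -> A o1 o0 = B o1 o0 -> A o1 o1 = B o1 o1 ->
  A = B.
Proof.
move=> h00 h01 h10 h11; apply/matrixP => -[[|[|//]] Ha] [[|[|//]] Hb];
  by rewrite (bool_irrelevance Ha isT) (bool_irrelevance Hb isT).
Qed.

Lemma mulmx2E (A B : 'M[C]_2) a b :
  (A *m B) a b = A a o0 * B o0 b + A a o1 * B o1 b.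
Proof.
rewrite mxE !big_ord_recl big_ord0 addr0.
by congr (_ * _ + _ * _); congr (_ _ _); apply: val_inj.
Qed.

Lemma mulii : 'i * 'i = -1 :> C. Proof. by rewrite -expr2 sqr_i. Qed.

Lemma muliiA (x : C) : 'i * ('i * x) = - x. Proof. by rewrite mulrA mulii mulN1r. Qed.

Lemma i_neq0 : 'i != 0 :> C.
Proof. by apply: contra_eqN (sqr_i R) => /eqP->; rewrite expr0n eq_sym oppr_eq0 oner_eq0. Qed.

Lemma phase_neq0 c : phase R c != 0.
Proof. exact/expf_neq0/i_neq0. Qed.

Ltac simp_C := rewrite /phase /= ?expr0 ?exprS ?expr0;
  do 2 rewrite ?(mulr0, mul0r, mulr1, mul1r, addr0, add0r, mulrN, mulNr, opprK,
                  muliiA, mulii, oppr0).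

Lemma pauli0 : pauli R i0 = 1%:M.
Proof. by apply: mx2P; rewrite !mxE. Qed.

Lemma mul_pauli31 : pauli R i3 *m pauli R i1 = phase R i1 *: pauli R i2.
Proof. by apply: mx2P; rewrite mulmx2E !mxE /=; simp_C. Qed.

(* Up to a nonzero factor this is tr (sigma_k M), for which the Pauli matrices are orthogonal. *)
Definition pauli_coord (k : 'I_4) (M : 'M[C]_2) : C :=
  match val k with
  | 0%N => M o0 o0 + M o1 o1
  | 1%N => M o0 o1 + M o1 o0
  | 2%N => M o0 o1 - M o1 o0
  | _ => M o0 o0 - M o1 o1
  end.

Lemma pauli_coordZ k c M : pauli_coord k (c *: M) = c * pauli_coord k M.
Proof. by case: k => [[|[|[|[|//]]]] Hk]; rewrite /pauli_coord /= !mxE ?mulrBr ?mulrDr. Qed.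

Lemma pauli_coord_pauli k k' : (pauli_coord k (pauli R k') != 0) = (k == k').
Proof.
case: k => [[|[|[|[|//]]]] Hk]; case: k' => [[|[|[|[|//]]]] Hk'];
  rewrite /pauli_coord /= !mxE /=; simp_C; rewrite ?subrr ?opprK ?addNr ?eqxx //;
  by rewrite -?opprD -mulr2n ?oppr_eq0 mulrn_eq0 /= ?oner_eq0 ?(negbTE i_neq0).
Qed.

Lemma scale_pauli_inj c c' k k' :
  c != 0 -> c *: pauli R k = c' *: pauli R k' -> k = k'.
Proof.
move=> c0 /(congr1 (pauli_coord k)) /eqP; rewrite !pauli_coordZ.
have [//|nkk'] := eqVneq k k'.
move: (pauli_coord_pauli k k'); rewrite (negbTE nkk') => /negbFE/eqP->.
by rewrite mulr0 mulf_eq0 (negbTE c0) -[_ == 0]negbK pauli_coord_pauli eqxx.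
Qed.

Lemma kprod_mul k i j k' c :
  pauli R j *m pauli R i = phase R c *: pauli R k' -> kprod R k i j = (k == k').
Proof.
move=> E; apply/existsP/eqP => [[c' /eqP]|->]; last by exists c; rewrite E.
by rewrite E => /esym /scale_pauli_inj; apply; exact: phase_neq0.
Qed.

Lemma kprod0l k j : kprod R k i0 j = (k == j).
Proof. by apply: (@kprod_mul _ _ _ _ i0); rewrite pauli0 mulmx1 /phase expr0 scale1r. Qed.

Lemma kprod0r k i : kprod R k i i0 = (k == i).
Proof. by apply: (@kprod_mul _ _ _ _ i0); rewrite pauli0 mul1mx /phase expr0 scale1r. Qed.

Lemma kprod13 k : kprod R k i1 i3 = (k == i2).
Proof. exact: kprod_mul mul_pauli31. Qed.

Lemma kcomm0l j : kcomm R i0 j.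
Proof. by rewrite /kcomm pauli0 mul1mx mulmx1. Qed.

Lemma kcomm0r i : kcomm R i i0.
Proof. by rewrite /kcomm pauli0 mul1mx mulmx1. Qed.

Lemma kcomm13 : kcomm R i1 i3 = false.
Proof.
apply/negbTE/eqP => /(congr1 (fun M : 'M[C]_2 => M o0 o1)) /eqP.
rewrite !mulmx2E !mxE /=; simp_C.
by rewrite -subr_eq0 -opprD -mulr2n oppr_eq0 mulrn_eq0 oner_eq0.
Qed.

End PauliAlgebra.

Section Entropy.
Variable R : realType.

Lemma xlog2x0 : xlog2x (0 : R) = 0.
Proof. by rewrite /xlog2x eqxx. Qed.

Lemma xlog2xE (x : R) : x != 0 -> xlog2x x = x * (ln x / ln 2).
Proof. by rewrite /xlog2x => /negbTE->. Qed.

Lemma mul_xlog2x_div (w a : R) : 0 < w -> 0 <= a ->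
  w * xlog2x (a / w) = xlog2x a - a * (ln w / ln 2).
Proof.
move=> w_gt0; rewrite le0r => /predU1P [->|a_gt0].
  by rewrite mul0r xlog2x0 mulr0 mul0r subr0.
rewrite !xlog2xE ?gt_eqF ?divr_gt0 // ln_div ?posrE //.
by field; rewrite !gt_eqF // ln_gt0 //; lra.
Qed.

Lemma mul_CE_div (w : R) (r : 'I_4 -> R) :
  (forall k, 0 <= r k) -> \sum_(k < 4) r k = w ->
  w * CE (fun k => r k / w) = 2 * w + \sum_(k < 4) xlog2x (r k) - xlog2x w.
Proof.
move=> r_ge0 sum_r; have [w0|w_neq0] := eqVneq w 0.
  have r0 k : r k = 0 :=
    (psumr_eq0P (P := predT) (fun i _ => r_ge0 i)) (etrans sum_r w0) k isT.
  by rewrite w0 xlog2x0 (eq_bigr _ (fun k _ => congr1 _ (r0 k))) xlog2x0 big1 // mul0r mulr0; lra.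
have w_gt0 : 0 < w by rewrite lt_def w_neq0 -sum_r sumr_ge0.
rewrite /CE mulrDr mulr_sumr (eq_bigr _ (fun k _ => mul_xlog2x_div w_gt0 (r_ge0 k))).
by rewrite sumrB -mulr_suml sum_r (xlog2xE w_neq0); ring.
Qed.

End Entropy.

Section Trajectory.
Variable R : realType.
Implicit Types (p q : R) (d e : 'I_4 -> R) (b : bool).

Definition branch_num d e b (k : 'I_4) : R :=
  \sum_(i < 4) \sum_(j < 4 | (kcomm R i j == b) && kprod R k i j) d i * e j.

Lemma branch_num_ge0 d e b k :
  (forall i, 0 <= d i) -> (forall j, 0 <= e j) -> 0 <= branch_num d e b k.
Proof. by move=> d_ge0 e_ge0; do 2 apply: sumr_ge0 => ? _; exact: mulr_ge0. Qed.

Lemma CEQ_grouping d e :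
  branch_p d e true + branch_p d e false = 1 ->
  (forall b k, 0 <= branch_num d e b k) ->
  (forall b, \sum_(k < 4) branch_num d e b k = branch_p d e b) ->
  CEQ d e = 2 + Hbin (branch_p d e true)
            + \sum_(k < 4) xlog2x (branch_num d e true k)
            + \sum_(k < 4) xlog2x (branch_num d e false k).
Proof.
move=> sum_p num_ge0 sum_num.
rewrite /CEQ !(mul_CE_div (num_ge0 _) (sum_num _)) /Hbin.
have -> : branch_p d e false = 1 - branch_p d e true by lra.
by ring.
Qed.

Lemma bitflip_ge0 p k : 0 <= p <= 1 -> 0 <= bitflip p k.
Proof. by move=> /andP [p_ge0 p_le1]; rewrite /bitflip; repeat case: ifP => _; lra. Qed.

Lemma phaseflip_ge0 q k : 0 <= q <= 1 -> 0 <= phaseflip q k.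
Proof. by move=> /andP [q_ge0 q_le1]; rewrite /phaseflip; repeat case: ifP => _; lra. Qed.

Lemma sum_ord4 (F : 'I_4 -> R) : \sum_(k < 4) F k = F i0 + F i1 + F i2 + F i3.
Proof.
rewrite !big_ord_recl big_ord0 addr0 !addrA.
by congr (F _ + F _ + F _ + F _); exact: val_inj.
Qed.

Lemma sum_pairs_XZ (P : 'I_4 -> 'I_4 -> bool) d e :
  d i2 = 0 -> d i3 = 0 -> e i1 = 0 -> e i2 = 0 ->
  \sum_(i < 4) \sum_(j < 4 | P i j) d i * e j =
    (if P i0 i0 then d i0 * e i0 else 0) + (if P i0 i3 then d i0 * e i3 else 0)
  + (if P i1 i0 then d i1 * e i0 else 0) + (if P i1 i3 then d i1 * e i3 else 0).
Proof.
move=> d2 d3 e1 e2; under eq_bigr do rewrite big_mkcond sum_ord4 e1 e2.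
by rewrite sum_ord4 d2 d3 !mulr0 !mul0r !if_same !addr0 ?add0r !addrA.
Qed.

Lemma branch_p_bitphase p q b :
  branch_p (bitflip p) (phaseflip q) b = if b then 1 - p * q else p * q.
Proof.
rewrite /branch_p (@sum_pairs_XZ (fun i j => kcomm R i j == b)) //.
by rewrite !kcomm0l !kcomm0r kcomm13 /bitflip /phaseflip /=; case: b => /=; ring.
Qed.

Lemma branch_num_bitphase p q b k :
  branch_num (bitflip p) (phaseflip q) b k =
  if b then
    if k == i0 then (1 - p) * (1 - q) else if k == i1 then p * (1 - q)
    else if k == i3 then (1 - p) * q else 0
  else if k == i2 then p * q else 0.
Proof.
rewrite /branch_num (@sum_pairs_XZ (fun i j => (kcomm R i j == b) && kprod R k i j)) //.
rewrite !kcomm0l !kcomm0r kcomm13 !kprod0l !kprod0r kprod13 /bitflip /phaseflip /=.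
by case: b; case: k => [[|[|[|[|//]]]] Hk] /=; ring.
Qed.

End Trajectory.

Theorem corollary2 (R : realType) (p q : R) :
  0 <= p <= 1 -> 0 <= q <= 1 ->
  let alpha := 1 - p * q in
  CEQ (bitflip p) (phaseflip q) =
    2 + Hbin alpha
      + xlog2x ((1 - p) * (1 - q)) + xlog2x (p * (1 - q))
      + xlog2x ((1 - p) * q) + xlog2x (p * q).
Proof.
move=> p01 q01 alpha.
rewrite CEQ_grouping.
- rewrite !sum_ord4 !branch_num_bitphase branch_p_bitphase /= !xlog2x0 /alpha.
  by ring.
- by rewrite !branch_p_bitphase; ring.
- by move=> b k; apply: branch_num_ge0 => ?; [exact: bitflip_ge0 | exact: phaseflip_ge0].
- move=> b; rewrite sum_ord4 !branch_num_bitphase branch_p_bitphase.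
  by case: b => /=; ring.
Qed.
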